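(* Let $n\ge2$, $q=2^m$, and let $\mathbf{H}_X^{(q)}$, $\mathbf{H}_Z^{(q)}$ be $q$-ary labelings of the toric Tanner graphs $\mathcal{G}_X$, $\mathcal{G}_Z$ (as defined in the context), with codes $\mathcal{C}_X^{(q)}$, $\mathcal{C}_Z^{(q)}$. If every cycle of the labeled graph $\mathcal{G}_X$ has product $1$ and $(\mathcal{C}_Z^{(q)})^\perp\subset\mathcal{C}_X^{(q)}$, then every cycle of the labeled graph $\mathcal{G}_Z$ has product $1$.
   Context: Indices are taken in $\mathbb{Z}_{2n}=\{0,\dots,2n-1\}$ with arithmetic mod $2n$. Variable nodes: $V=\{(i,j)\in\mathbb{Z}_{2n}^2: i+j\text{ even}\}$ ($2n^2$ nodes). $X$-check nodes: $C_X=\{(i,j): i\text{ odd}, j\text{ even}\}$; $Z$-check nodes: $C_Z=\{(i,j): i\text{ even}, j\text{ odd}\}$. Each check node $(i,j)$ is adjacent to the four variable nodes $(i\pm1,j)$, $(i,j\pm1)$. $\mathcal{G}_X$ is the bipartite graph on $V\cup C_X$ and $\mathcal{G}_Z$ on $V\cup C_Z$ (these are the Tanner graphs of the binary toric code). A $q$-ary labeling is a matrix $\mathbf{H}_X^{(q)}=(x_{c,v})\in\mathbb{F}_q^{C_X\times V}$ with $x_{c,v}\neq0$ iff $c$ and $v$ are adjacent, and similarly $\mathbf{H}_Z^{(q)}=(z_{c,v})\in\mathbb{F}_q^{C_Z\times V}$; the label of edge $(c,v)$ is $x_{c,v}$ (resp. $z_{c,v}$). $\mathcal{C}_X^{(q)}=\{w\in\mathbb{F}_q^V:\mathbf{H}_X^{(q)}w=0\}$,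 $\mathcal{C}_Z^{(q)}=\{w\in\mathbb{F}_q^V:\mathbf{H}_Z^{(q)}w=0\}$, and $\perp$ is with respect to the standard bilinear form on $\mathbb{F}_q^V$ (so $(\mathcal{C}_Z^{(q)})^\perp\subset\mathcal{C}_X^{(q)}$ iff $\mathbf{H}_X^{(q)}(\mathbf{H}_Z^{(q)})^T=0$). For a cycle $v_1,c_1,v_2,\dots,v_k,c_k,v_1$ in a labeled Tanner graph with labels $h_{c,v}$, its product is $\prod_{t=1}^k h_{c_t v_{t+1}}h_{c_t v_t}^{-1}$ (indices of $v$ mod $k$). *)

From HB Require Import structures.
From mathcomp Require Import all_boot all_order all_algebra all_field.
Set Implicit Arguments. Unset Strict Implicit. Unset Printing Implicit Defensive.
Import GRing.Theory.
Local Open Scope ring_scope.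

(* Z_{2n} represented as 'I_(n.*2); a node is a pair (i,j). *)
Definition node (n : nat) := ('I_(n.*2) * 'I_(n.*2))%type.

Definition isV n (x : node n) : bool := ~~ odd (x.1 + x.2)%N.
Definition isCX n (x : node n) : bool := odd x.1 && ~~ odd x.2.
Definition isCZ n (x : node n) : bool := ~~ odd x.1 && odd x.2.

Definition Vnode n := {x : node n | isV x}.
Definition CXnode n := {x : node n | isCX x}.
Definition CZnode n := {x : node n | isCZ x}.

Definition nbr n (a b : 'I_(n.*2)) : bool :=
  (((a + 1) %% n.*2)%N == b) || (((b + 1) %% n.*2)%N == a).

Definition adj n (c v : node n) : bool :=
  ((c.2 == v.2) && nbr c.1 v.1) || ((c.1 == v.1) && nbr c.2 v.2).

Definition labeling (F : fieldType) n (C : finType) (cval : C -> node n)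
  (H : C -> Vnode n -> F) : Prop :=
  forall c v, (H c v != 0) = adj (cval c) (val v).

Definition code (F : fieldType) n (C : finType) (H : C -> Vnode n -> F)
  (w : Vnode n -> F) : Prop :=
  forall c, \sum_(v : Vnode n) H c v * w v = 0.

Definition dotV (F : fieldType) n (w u : Vnode n -> F) : F :=
  \sum_(v : Vnode n) w v * u v.

Definition perp_sub (F : fieldType) n (code1 code2 : (Vnode n -> F) -> Prop) : Prop :=
  forall w, (forall u, code1 u -> dotV w u = 0) -> code2 w.

Definition is_cycle n (C : finType) (cval : C -> node n) (k : nat)
  (vs : 'I_k -> Vnode n) (cs : 'I_k -> C) : Prop :=
  [/\ (2 <= k)%N, injective vs, injective cs &
      forall t : 'I_k, adj (cval (cs t)) (val (vs t)) &&
                       adj (cval (cs t)) (val (vs (ordS t)))].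

Definition cycle_product (F : fieldType) n (C : finType) (H : C -> Vnode n -> F)
  (k : nat) (vs : 'I_k -> Vnode n) (cs : 'I_k -> C) : F :=
  \prod_(t < k) (H (cs t) (vs (ordS t)) / H (cs t) (vs t)).

Definition all_cycles_one (F : fieldType) n (C : finType) (cval : C -> node n)
  (H : C -> Vnode n -> F) : Prop :=
  forall k (vs : 'I_k -> Vnode n) (cs : 'I_k -> C),
    is_cycle cval vs cs -> cycle_product H vs cs = 1.

From HB Require Import structures.
From mathcomp Require Import all_boot all_order all_algebra all_field.
From mathcomp Require Import ring zify.
Set Implicit Arguments. Unset Strict Implicit. Unset Printing Implicit Defensive.
Import GRing.Theory.
Local Open Scope ring_scope.

(* In characteristic 2, orthogonality of the rows of an X-check cx and a
   Z-check cz sharing exactly the two variables v, w reads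
   HX(cx,v) HZ(cz,v) = HX(cx,w) HZ(cz,w), so HZ(cz,v) / HZ(cz,w) is the
   product of the walk v, cx, w of G_X.  On the torus any two neighbours of a
   Z-check are joined by one or two such X-steps.  Chaining them along a cycle
   of G_Z gives a closed walk of G_X whose product is the inverse of the cycle
   product, and in a labeled graph whose cycles all have product 1 every
   closed walk has product 1: cut it at a repeated variable or check node into
   two shorter closed walks. *)

Lemma not_uniq_map_split (T U : eqType) (f : T -> U) (l : seq T) :
  ~~ uniq (map f l) ->
  exists l1 x l2 y l3, l = l1 ++ x :: l2 ++ y :: l3 /\ f x = f y.
Proof.
elim: l => [|x l IH] //=; rewrite negb_and negbK => /orP[|/IH].
  by case/mapP=> y /splitPr[l2 l3] fxy; exists [::], x, l2, y, l3.
by case=> l1 [x' [l2 [y [l3 [-> fxy]]]]]; exists (x :: l1), x', l2, y, l3.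
Qed.

Lemma belast_uniq (T : eqType) (a : T) l :
  last a l = a -> uniq l -> uniq (belast a l).
Proof.
case: l => [//|x l] end_l; have {}end_l : last x l = a := end_l.
by rewrite {1}lastI end_l rcons_uniq.
Qed.

Section LabeledWalks.

Variables (F : fieldType) (C V : eqType) (h : C -> V -> F).

(* A walk from [a] is the list of its steps [(c, v)], each passing from the
   current variable node through the check [c] to [v]. *)
Fixpoint walk_prod (a : V) (s : seq (C * V)) : F :=
  if s is (c, v) :: s' then h c v / h c a * walk_prod v s' else 1.

Fixpoint walk_ok (a : V) (s : seq (C * V)) : bool :=
  if s is (c, v) :: s' then [&& h c a != 0, h c v != 0 & walk_ok v s']
  else true.

Definition walk_end (a : V) (s : seq (C * V)) : V := last a (map snd s).

Definition closed_walk (a : V) (s : seq (C * V)) : bool :=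
  walk_ok a s && (walk_end a s == a).

Definition walk_rel (v w : V) (r : F) : Prop :=
  exists s, [/\ walk_ok v s, walk_end v s = w & walk_prod v s = r].

(* Balanced in the sense of gain graphs (Zaslavsky), for the graph given by
   the nonzero pattern of [h]. *)
Definition balanced : Prop :=
  forall k (vs : 'I_k -> V) (cs : 'I_k -> C),
    (2 <= k)%N -> injective vs -> injective cs ->
    (forall t, (h (cs t) (vs t) != 0) && (h (cs t) (vs (ordS t)) != 0)) ->
    \prod_(t < k) (h (cs t) (vs (ordS t)) / h (cs t) (vs t)) = 1.

Lemma walk_prod_cat a s1 s2 :
  walk_prod a (s1 ++ s2) = walk_prod a s1 * walk_prod (walk_end a s1) s2.
Proof. by elim: s1 a => [|[c v] s1 IH] a /=; rewrite ?mul1r ?IH ?mulrA. Qed.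

Lemma walk_ok_cat a s1 s2 :
  walk_ok a (s1 ++ s2) = walk_ok a s1 && walk_ok (walk_end a s1) s2.
Proof. by elim: s1 a => [|[c v] s1 IH] a //=; rewrite IH !andbA. Qed.

Lemma walk_end_cat a s1 s2 :
  walk_end a (s1 ++ s2) = walk_end (walk_end a s1) s2.
Proof. by rewrite /walk_end map_cat last_cat. Qed.

Lemma walk_end_cons a c v s : walk_end a ((c, v) :: s) = walk_end v s.
Proof. by []. Qed.

Lemma walk_end_rcons a s x : walk_end a (rcons s x) = x.2.
Proof. by rewrite /walk_end map_rcons last_rcons. Qed.

Lemma walk_prod_nth c0 d a s :
  walk_prod a s = \prod_(t < size s)
    (h (nth c0 (map fst s) t) (nth d (map snd s) t) /
     h (nth c0 (map fst s) t) (nth d (a :: map snd s) t)).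
Proof.
elim: s a => [|[c v] s IH] a /=; first by rewrite big_ord0.
by rewrite big_ord_recl /= IH.
Qed.

Lemma walk_ok_nth c0 d a s : walk_ok a s -> forall t, (t < size s)%N ->
  (h (nth c0 (map fst s) t) (nth d (a :: map snd s) t) != 0) &&
  (h (nth c0 (map fst s) t) (nth d (map snd s) t) != 0).
Proof.
elim: s a => [|[c v] s IH] a //= /and3P[hca hcv ok_s] [|t] //=.
  by rewrite hca hcv.
by rewrite ltnS; apply: IH.
Qed.

Lemma walk_rel_refl v : walk_rel v v 1.
Proof. by exists [::]. Qed.

Lemma walk_rel_step c v w : h c v != 0 -> h c w != 0 ->
  walk_rel v w (h c w / h c v).
Proof. by move=> hv hw; exists [:: (c, w)]; rewrite /= hv hw mulr1. Qed.

Lemma walk_rel_trans u v w r1 r2 :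
  walk_rel u v r1 -> walk_rel v w r2 -> walk_rel u w (r1 * r2).
Proof.
case=> [s1 [ok1 end1 prod1]] [s2 [ok2 end2 prod2]]; exists (s1 ++ s2).
by rewrite walk_ok_cat walk_end_cat walk_prod_cat end1 ok1 ok2 end2 prod1 prod2.
Qed.

Lemma walk_rel_trans_div (g : V -> F) u v w : g v != 0 ->
  walk_rel u v (g u / g v) -> walk_rel v w (g v / g w) ->
  walk_rel u w (g u / g w).
Proof. by move=> gv uv vw; have := walk_rel_trans uv vw; rewrite mulrA divfK. Qed.

Lemma walk_rel_cycle k (f : 'I_k.+1 -> V) (r : 'I_k.+1 -> F) :
  (forall t, walk_rel (f t) (f (ordS t)) (r t)) ->
  walk_rel (f ord0) (f ord0) (\prod_t r t).
Proof.
move=> step.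
have inord_overflow : inord k.+1 = ord0 :> 'I_k.+1.
  by apply: val_inj; rewrite /= val_insubd ltnn.
have ordS_inord j : (j < k.+1)%N -> ordS (inord j : 'I_k.+1) = inord j.+1.
  move=> lt_jk; apply: val_inj; rewrite /= inordK //.
  have [lt_jSk | ge_jSk] := ltnP j.+1 k.+1; first by rewrite modn_small // inordK.
  have -> : j.+1 = k.+1 by apply/eqP; rewrite eqn_leq lt_jk ge_jSk.
  by rewrite modnn inord_overflow.
have prefix j : (j <= k.+1)%N ->
    walk_rel (f ord0) (f (inord j)) (\prod_(i < j) r (inord i)).
  elim: j => [_ | j IH lt_jk].
    have -> : inord 0 = ord0 :> 'I_k.+1 by apply/val_inj/inordK.
    by rewrite big_ord0; apply: walk_rel_refl.
  rewrite big_ord_recr /= -ordS_inord //.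
  exact: walk_rel_trans (IH (ltnW lt_jk)) (step _).
have := prefix k.+1 (leqnn _).
by rewrite inord_overflow (eq_bigr r) // => i _; rewrite inord_val.
Qed.

Lemma closed_walk_excise a s1 s2 s3 :
  walk_end (walk_end a s1) s2 = walk_end a s1 ->
  closed_walk a (s1 ++ s2 ++ s3) ->
  [/\ closed_walk a (s1 ++ s3), closed_walk (walk_end a s1) s2 &
      walk_prod a (s1 ++ s2 ++ s3) =
      walk_prod a (s1 ++ s3) * walk_prod (walk_end a s1) s2].
Proof.
rewrite /closed_walk !walk_ok_cat !walk_end_cat !walk_prod_cat => loop.
rewrite loop eqxx andbT => /andP[/and3P[-> -> ->] ->]; split => //.
by rewrite mulrA mulrAC.
Qed.

(* Two visits of the same check [c] are rewired into the closed walk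
   [c, v1, ..., c] and the walk with the detour between them removed. *)
Lemma closed_walk_rewire a l1 c v1 l2 v2 l3 :
  closed_walk a (l1 ++ (c, v1) :: l2 ++ (c, v2) :: l3) ->
  [/\ closed_walk a (l1 ++ (c, v2) :: l3),
      closed_walk v1 (rcons l2 (c, v1)) &
      walk_prod a (l1 ++ (c, v1) :: l2 ++ (c, v2) :: l3) =
      walk_prod a (l1 ++ (c, v2) :: l3) * walk_prod v1 (rcons l2 (c, v1))].
Proof.
rewrite /closed_walk -cats1.
rewrite !(walk_ok_cat, walk_end_cat, walk_prod_cat, walk_end_cons) /=.
rewrite !(walk_ok_cat, walk_prod_cat) /= andbT.
case/andP=> /and4P[-> -> hv1 /and4P[-> -> -> ->]] ->.
by rewrite hv1 /= eqxx; split => //; ring.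
Qed.

Section Balanced.

Hypothesis h_balanced : balanced.

Lemma simple_closed_walk_prod a s : closed_walk a s ->
  uniq (map fst s) -> uniq (map snd s) -> walk_prod a s = 1.
Proof.
case: s => [//|[c0 v0] s'] /andP[ok_s /eqP end_s] uniq_c uniq_v.
case: s' => [|x s'] in ok_s end_s uniq_c uniq_v *.
  move: ok_s end_s => /= /and3P[hca _ _]; rewrite /walk_end /= => ->.
  by rewrite mulr1 mulfV.
set s := [:: (c0, v0), x & s'] in ok_s end_s uniq_c uniq_v *.
set l := map snd s.
pose vs (t : 'I_(size s)) := nth a (a :: l) t.
pose cs (t : 'I_(size s)) := nth c0 (map fst s) t.
have vs_ordS t : vs (ordS t) = nth a l t.
  rewrite /vs /=; have [lt_tS | ge_tS] := ltnP t.+1 (size s).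
    by rewrite modn_small.
  have eq_tS : t.+1 = size s by apply/eqP; rewrite eqn_leq ltn_ord ge_tS.
  by rewrite eq_tS modnn /= -[in LHS]end_s /walk_end -nth_last size_map -eq_tS.
have vs_belast (t : 'I_(size s)) : vs t = nth a (belast a l) t.
  by rewrite /vs lastI nth_rcons size_belast size_map ltn_ord.
have uniq_belast : uniq (belast a l) by apply: belast_uniq.
rewrite (walk_prod_nth c0 a) -[RHS](@h_balanced (size s) vs cs) //.
- by apply: eq_bigr => t _; rewrite vs_ordS.
- move=> t1 t2; rewrite !vs_belast => /eqP.
  by rewrite nth_uniq ?size_belast ?size_map // => /eqP /val_inj.
- move=> t1 t2 /eqP.
  by rewrite nth_uniq ?size_map // => /eqP /val_inj.
- by move=> t; rewrite vs_ordS; exact: walk_ok_nth.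
Qed.

Lemma balanced_closed_walk_prod a s : closed_walk a s -> walk_prod a s = 1.
Proof.
have [N] := ubnP (size s); elim: N a s => // N IH a s lt_sN closed_s.
have [uniq_v | ] := boolP (uniq (map snd s)); last first.
  case/not_uniq_map_split=> l1 [x [l2 [y [l3 [def_s eq_xy]]]]].
  rewrite def_s -cat_rcons -cat_rcons in lt_sN closed_s *.
  have loop : walk_end (walk_end a (rcons l1 x)) (rcons l2 y)
              = walk_end a (rcons l1 x) by rewrite !walk_end_rcons eq_xy.
  have [closed1 closed2 ->] := closed_walk_excise loop closed_s.
  move: lt_sN; rewrite !size_cat !size_rcons => lt_sN.
  by rewrite !IH ?mulr1 // ?size_cat ?size_rcons; lia.
have [uniq_c | ] := boolP (uniq (map fst s)).
  exact: simple_closed_walk_prod.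
case/not_uniq_map_split=> l1 [[c v1] [l2 [[c' v2] [l3 [def_s /= eq_cc]]]]].
rewrite def_s -eq_cc in lt_sN closed_s *.
have [closed1 closed2 ->] := closed_walk_rewire closed_s.
move: lt_sN; rewrite !size_cat /= size_cat /= => lt_sN.
by rewrite !IH ?mulr1 // ?size_cat ?size_rcons /=; lia.
Qed.

Lemma balanced_walk_rel_cycle v r : walk_rel v v r -> r = 1.
Proof.
case=> s [ok_s end_s <-]; apply: balanced_closed_walk_prod.
by rewrite /closed_walk ok_s end_s eqxx.
Qed.

End Balanced.

End LabeledWalks.

Lemma labeling_eq0 (F : fieldType) n (C : finType) (cval : C -> node n)
    (H : C -> Vnode n -> F) c v :
  labeling cval H -> ~~ adj (cval c) (val v) -> H c v = 0.
Proof. by move=> lab; rewrite -lab negbK => /eqP. Qed.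

Lemma labeling_balanced (F : fieldType) n (C : finType) (cval : C -> node n)
    (H : C -> Vnode n -> F) :
  labeling cval H -> all_cycles_one cval H -> balanced H.
Proof.
move=> lab cyc k vs cs k_ge2 inj_vs inj_cs nz; apply: cyc; split => // t.
by rewrite -!lab.
Qed.

Lemma perp_sub_code_orth (F : fieldType) n (CX CZ : finType)
    (HX : CX -> Vnode n -> F) (HZ : CZ -> Vnode n -> F) :
  perp_sub (code HZ) (code HX) -> forall cx cz, \sum_u HX cx u * HZ cz u = 0.
Proof. by move=> perp cx cz; apply: (perp (HZ cz)) => // u; apply. Qed.

Lemma odd_succ_mod (N x : nat) :
  ~~ odd N -> (x < N)%N -> odd ((x + 1) %% N) = ~~ odd x.
Proof.
move=> even_N lt_xN; have [lt_x1N | ge_x1N] := ltnP (x + 1) N.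
  by rewrite modn_small // addn1.
have def_N : N = x.+1 by lia.
by move: even_N; rewrite def_N addn1 modnn /= negbK => ->.
Qed.

Section TorusNeighbours.

Variable n : nat.

Lemma nbr_sym (a b : 'I_(n.*2)) : nbr a b = nbr b a.
Proof. by rewrite /nbr orbC. Qed.

Lemma odd_nbr (a b : 'I_(n.*2)) : nbr a b -> odd b = ~~ odd a.
Proof.
have even_2n : ~~ odd n.*2 by rewrite odd_double.
by case/orP => /eqP <-; rewrite odd_succ_mod ?negbK.
Qed.

Lemma nbr_irrefl (a : 'I_(n.*2)) : ~~ nbr a a.
Proof. by apply/negP => /odd_nbr; case: (odd a). Qed.

Lemma exists_nbr (a : 'I_(n.*2)) : exists b : 'I_(n.*2), nbr a b.
Proof.
have n2_gt0 : (0 < n.*2)%N by apply: leq_ltn_trans (ltn_ord a).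
by exists (Ordinal (ltn_pmod (a + 1) n2_gt0)); rewrite /nbr eqxx.
Qed.

Lemma zcheck_row_nbr (cz : CZnode n) :
  exists y : Vnode n, (val cz).2 = (val y).2 /\ nbr (val cz).1 (val y).1.
Proof.
have /andP[even1 odd2] := valP cz; have [b nb] := exists_nbr (val cz).1.
have isVy : isV (b, (val cz).2).
  by rewrite /isV /= oddD (odd_nbr nb) (negbTE even1) odd2.
by exists (exist _ (b, (val cz).2) isVy).
Qed.

Lemma zcheck_col_nbr (cz : CZnode n) :
  exists y : Vnode n, (val cz).1 = (val y).1 /\ nbr (val cz).2 (val y).2.
Proof.
have /andP[even1 odd2] := valP cz; have [b nb] := exists_nbr (val cz).2.
have isVy : isV ((val cz).1, b).
  by rewrite /isV /= oddD (odd_nbr nb) odd2 (negbTE even1).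
by exists (exist _ ((val cz).1, b) isVy).
Qed.

(* The witness is the X-check (v.1, w.2), a corner of the square around [cz]. *)
Lemma corner_xcheck (cz : CZnode n) (v w : Vnode n) :
  (val cz).2 = (val v).2 -> nbr (val cz).1 (val v).1 ->
  (val cz).1 = (val w).1 -> nbr (val cz).2 (val w).2 ->
  exists cx : CXnode n, [/\ adj (val cx) (val v), adj (val cx) (val w) &
    forall u : Vnode n, adj (val cx) (val u) -> adj (val cz) (val u) ->
      u = v \/ u = w].
Proof.
case: cz => [[c1 c2] isCZc]; case: v => [[v1 v2] isVv].
case: w => [[w1 w2] isVw] /= eq2 nb1 eq1 nb2; subst v2 w1.
have /andP[even1 odd2] := isCZc.
have isCXc : isCX (v1, w2) by rewrite /isCX (odd_nbr nb1) (odd_nbr nb2) even1 odd2.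
exists (exist _ (v1, w2) isCXc); split.
- by rewrite /adj /= eqxx (nbr_sym w2) nb2 orbT.
- by rewrite /adj /= eqxx (nbr_sym v1) nb1.
case=> [[u1 u2] isVu]; rewrite /adj /=.
case/orP=> /andP[/eqP eq_x nb_x]; case/orP=> /andP[/eqP eq_z nb_z]; subst.
- by rewrite (negbTE (nbr_irrefl _)) in nb2.
- by right; apply: val_inj.
- by left; apply: val_inj.
- by rewrite (negbTE (nbr_irrefl _)) in nb1.
Qed.

End TorusNeighbours.

Section ToricWalks.

Variables (n : nat) (F : fieldType).
Variables (HX : CXnode n -> Vnode n -> F) (HZ : CZnode n -> Vnode n -> F).
Hypothesis hHX : labeling (fun c : CXnode n => val c) HX.
Hypothesis hHZ : labeling (fun c : CZnode n => val c) HZ.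
Hypothesis HX_HZ_orth : forall cx cz, \sum_u HX cx u * HZ cz u = 0.
Hypothesis pchar2 : 2 \in [pchar F].

Lemma corner_walk (cz : CZnode n) (v w : Vnode n) :
  (val cz).2 = (val v).2 -> nbr (val cz).1 (val v).1 ->
  (val cz).1 = (val w).1 -> nbr (val cz).2 (val w).2 ->
  walk_rel HX v w (HZ cz v / HZ cz w) /\ walk_rel HX w v (HZ cz w / HZ cz v).
Proof.
move=> eq2 nb1 eq1 nb2.
have [cx [adj_v adj_w common]] := corner_xcheck eq2 nb1 eq1 nb2.
have v_neq_w : v != w.
  by apply: contraNneq (nbr_irrefl (val cz).2) => eq_vw; rewrite {2}eq2 eq_vw.
have HXv : HX cx v != 0 by rewrite hHX.
have HXw : HX cx w != 0 by rewrite hHX.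
have HZv : HZ cz v != 0 by rewrite hHZ /adj eq2 eqxx nb1.
have HZw : HZ cz w != 0 by rewrite hHZ /adj eq1 eqxx nb2 orbT.
(* In characteristic 2 the two surviving terms of the inner product are equal. *)
have eq_terms : HX cx v * HZ cz v = HX cx w * HZ cz w.
  have := HX_HZ_orth cx cz; rewrite (bigD1 v) // (bigD1 w) 1?eq_sym //= big1.
    by rewrite addr0 => /eqP; rewrite addr_eq0 oppr_pchar2 // => /eqP.
  move=> u /andP[u_neq_w u_neq_v].
  have [adj_x | /(labeling_eq0 hHX) ->] := boolP (adj (val cx) (val u)).
    have [adj_z | /(labeling_eq0 hHZ) ->] := boolP (adj (val cz) (val u)).
      by case: (common u adj_x adj_z) => eq_u; rewrite eq_u eqxx in u_neq_v u_neq_w.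
    by rewrite mulr0.
  by rewrite mul0r.
split.
- have -> : HZ cz v / HZ cz w = HX cx w / HX cx v.
    by apply/eqP; rewrite eqr_div // mulrC -eq_terms mulrC.
  exact: walk_rel_step.
- have -> : HZ cz w / HZ cz v = HX cx v / HX cx w.
    by apply/eqP; rewrite eqr_div // mulrC eq_terms mulrC.
  exact: walk_rel_step.
Qed.

(* Two neighbours on the same axis of [cz] are joined through a neighbour on
   the other axis. *)
Lemma zcheck_walk (cz : CZnode n) (v w : Vnode n) :
  adj (val cz) (val v) -> adj (val cz) (val w) ->
  walk_rel HX v w (HZ cz v / HZ cz w).
Proof.
have [y [eq_y nb_y]] := zcheck_col_nbr cz.
have [x [eq_x nb_x]] := zcheck_row_nbr cz.
have HZy : HZ cz y != 0 by rewrite hHZ /adj eq_y eqxx nb_y orbT.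
have HZx : HZ cz x != 0 by rewrite hHZ /adj eq_x eqxx nb_x.
case/orP=> /andP[/eqP eq_v nb_v]; case/orP=> /andP[/eqP eq_w nb_w].
- have [vy _] := corner_walk eq_v nb_v eq_y nb_y.
  have [_ yw] := corner_walk eq_w nb_w eq_y nb_y.
  exact: walk_rel_trans_div HZy vy yw.
- by case: (corner_walk eq_v nb_v eq_w nb_w).
- by case: (corner_walk eq_w nb_w eq_v nb_v).
- have [_ vx] := corner_walk eq_x nb_x eq_v nb_v.
  have [xw _] := corner_walk eq_x nb_x eq_w nb_w.
  exact: walk_rel_trans_div HZx vx xw.
Qed.

End ToricWalks.

(* [hn] is unused: the argument works for every torus, including the 2 x 2 one. *)
Theorem lemma3 (n m : nat) (F : finFieldType) (hn : (2 <= n)%N)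
  (hq : #|F| = (2 ^ m)%N)
  (HX : CXnode n -> Vnode n -> F) (HZ : CZnode n -> Vnode n -> F)
  (hHX : labeling (fun c : CXnode n => val c) HX)
  (hHZ : labeling (fun c : CZnode n => val c) HZ) :
  all_cycles_one (fun c : CXnode n => val c) HX ->
  perp_sub (code HZ) (code HX) ->
  all_cycles_one (fun c : CZnode n => val c) HZ.
Proof.
move=> cycX perp [|k] vs cs [k_ge2 _ _ adj_cs] //.
have pchar2 : 2 \in [pchar F] by apply: (card_finPcharP hq).
have orth := perp_sub_code_orth perp.
have step t : walk_rel HX (vs t) (vs (ordS t))
    (HZ (cs t) (vs t) / HZ (cs t) (vs (ordS t))).
  by case/andP: (adj_cs t) => adj_t adj_tS; apply: zcheck_walk.
have balX := labeling_balanced hHX cycX.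
have prod1 := balanced_walk_rel_cycle balX (walk_rel_cycle step).
rewrite /cycle_product -[RHS]invr1 -[X in _ = X^-1]prod1 -prodfV.
by apply: eq_bigr => t _; rewrite invf_div.
Qed.
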